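(* Let $\lambda>0$, $\xi>0$, $v_2<v_1$ with either $v_2<0<v_1$ or $0<v_2<v_1$. Let $X(t)$ be the extended telegraph process driven by GCPs with parameter $\lambda$ (no resets) and $\tilde X(t)$ the same process subject to Poissonian resets to the origin at rate $\xi$, both started at the origin with velocity $v_j$, and let $E_j$ denote the corresponding conditional expectations. Define the mean-square distance $\Delta_j^\lambda(\xi,t):=E_j[\tilde X^2(t)]+E_j[X^2(t)]-2E_j[\tilde X(t)]\,E_j[X(t)]$. Then for $t\ge0$ and $j=1,2$, $$\Delta_j^\lambda(\xi,t)=E_j[X^2(t)]+A_j^\lambda(\xi,t),\qquad E_j[X^2(t)]=\frac{t^2[3v_j^2+\lambda t(v_1^2+v_1v_2+v_2^2)]}{3(1+\lambda t)},$$ where $$ \begin{aligned} A_j^\lambda(\xi,t)&=-te^{-\xi t}\Big[\frac{2v_j^2-v_1v_2-v_{3-j}^2}{3\lambda(1+\lambda t)}+\frac{2(v_1^2+v_1v_2+v_2^2)}{3\xi}+\frac{t(v_j-v_{3-j})[2v_j+\lambda t(v_1+v_2)]}{2(1+\lambda t)^2}\Big]\\ &\quad+(1-e^{-\xi t})\Big[\frac{2(v_1^2+v_1v_2+v_2^2)}{3\xi^2}+\frac{2v_j^2-v_1v_2-v_{3-j}^2}{3\lambda}\Big(\frac1\xi-\frac1\lambda\Big)-\frac{t(2v_j+\lambda t(v_1+v_2))}{2(1+\lambda t)}\Big(\frac{v_j-v_{3-j}}{\lambda}+\frac{v_1+v_2}{\xi}\Big)\Big]\\ &\quad+\frac{e^{\xi/\lambda}\xi}{\lambda^2}G_\xi(t)\Big[\frac{2v_j^2-v_1v_2-v_{3-j}^2}{3\lambda}+\frac{t(v_j-v_{3-j})(2v_j+\lambda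 t(v_1+v_2))}{2(1+\lambda t)}\Big], \end{aligned} $$ with $G_\xi(t)=\Gamma[0,\frac\xi\lambda,\frac\xi\lambda(1+\lambda t)]$.
   Context: GCP with intensity $\lambda>0$: a Poisson process whose rate is random, exponentially distributed with mean $\lambda$; increments satisfy $P\{\tilde N_\lambda(t+s)-\tilde N_\lambda(t)=k\}=\frac{1}{1+\lambda s}(\frac{\lambda s}{1+\lambda s})^k$. Process without resets $X(t)$: a particle starts at the origin with velocity $v_j$ ($v_1,v_2\ne0$, $v_2<v_1$), moves with velocity alternating between $v_1$ and $v_2$, the periods at velocity $v_1$ and at $v_2$ governed by two independent GCPs of intensity $\lambda$; its law given $V(0)=v_j$ has generalized density $p(x,t|v_j)=\frac{\delta(x-v_jt)}{1+\lambda t}+\mathbb 1_{\{v_2t<x<v_1t\}}\frac{\lambda}{(v_1-v_2)(1+\lambda t)}$ ($\delta$ Dirac delta), and it is known that $E_j[X(t)]=\frac{t[2v_j+\lambda t(v_1+v_2)]}{2(1+\lambda t)}$. Reset process $\tilde X(t)$: same dynamics but instantaneously reset to the origin at the epochs of an independent Poisson process of rate $\xi$, restarting afresh with velocity $v_j$; its density is $\tilde p(x,t|v_j)=e^{-\xi t}p(x,t|v_j)+\xi\int_0^te^{-\xi s}p(x,s|v_j)ds$. $\Gamma(a,z_0,z_1)=\int_{z_0}^{z_1}s^{a-1}e^{-s}ds$. *)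

From Stdlib Require Import Reals.
From Coquelicot Require Import Coquelicot.
Open Scope R_scope.

Definition vel (v1 v2 : R) (j : nat) : R := if Nat.eqb j 1 then v1 else v2.
Definition vel_other (v1 v2 : R) (j : nat) : R := if Nat.eqb j 1 then v2 else v1.

(* E_j[f(X(t))] for the process without resets: integral of f against the
   generalized density
   p(x,t|v_j) = delta(x - v_j t)/(1+lam t)
                + 1_{v2 t < x < v1 t} lam / ((v1-v2)(1+lam t)). *)
Definition EX (lam v1 v2 vj : R) (f : R -> R) (t : R) : R :=
  f (vj * t) / (1 + lam * t)
  + RInt (fun x => f x * (lam / ((v1 - v2) * (1 + lam * t)))) (v2 * t) (v1 * t).

(* E_j[f(X~(t))] for the reset process: integral of f against
   p~(x,t|v_j) = e^{-xi t} p(x,t|v_j) + xi int_0^t e^{-xi s} p(x,s|v_j) ds. *)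
Definition EXr (lam xi v1 v2 vj : R) (f : R -> R) (t : R) : R :=
  exp (- xi * t) * EX lam v1 v2 vj f t
  + xi * RInt (fun s => exp (- xi * s) * EX lam v1 v2 vj f s) 0 t.

Definition Delta_ms (lam xi v1 v2 : R) (j : nat) (t : R) : R :=
  let vj := vel v1 v2 j in
  EXr lam xi v1 v2 vj (fun x => x ^ 2) t + EX lam v1 v2 vj (fun x => x ^ 2) t
  - 2 * EXr lam xi v1 v2 vj (fun x => x) t * EX lam v1 v2 vj (fun x => x) t.

(* Incomplete gamma Gamma(a, z0, z1) = int_{z0}^{z1} s^{a-1} e^{-s} ds
   (used with z0 > 0, where Rpower is the genuine power). *)
Definition Gamma_inc (a z0 z1 : R) : R :=
  RInt (fun s => Rpower s (a - 1) * exp (- s)) z0 z1.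

Definition Gxi (lam xi t : R) : R :=
  Gamma_inc 0 (xi / lam) (xi / lam * (1 + lam * t)).

Definition A_fun (lam xi v1 v2 : R) (j : nat) (t : R) : R :=
  let vj := vel v1 v2 j in
  let vk := vel_other v1 v2 j in
  let S := v1 ^ 2 + v1 * v2 + v2 ^ 2 in
  let D := 2 * vj ^ 2 - v1 * v2 - vk ^ 2 in
  let L := 1 + lam * t in
  let B := 2 * vj + lam * t * (v1 + v2) in
  - t * exp (- xi * t) *
      (D / (3 * lam * L) + 2 * S / (3 * xi) + t * (vj - vk) * B / (2 * L ^ 2))
  + (1 - exp (- xi * t)) *
      (2 * S / (3 * xi ^ 2) + D / (3 * lam) * (1 / xi - 1 / lam)
       - t * B / (2 * L) * ((vj - vk) / lam + (v1 + v2) / xi))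
  + exp (xi / lam) * xi / lam ^ 2 * Gxi lam xi t *
      (D / (3 * lam) + t * (vj - vk) * B / (2 * L)).

(** The mean and the second moment of the telegraph process without resets are
    rational functions of [t] with the single pole [-1/lam], so each of them is a
    quadratic polynomial plus a multiple of [1/(1 + lam s)].  Integrating against
    the reset weight [xi e^{-xi s}] therefore only produces elementary terms and
    the integral of [e^{-xi s}/(1 + lam s)], which the substitution
    [u = xi/lam (1 + lam s)] turns into the incomplete gamma function
    [Gamma(0, xi/lam, xi/lam (1 + lam t))].  The identity for [Delta] is then a
    rational identity in the remaining quantities. *)

From Stdlib Require Import Reals Lra Lia.
From Coquelicot Require Import Coquelicot.
Open Scope R_scope.

Lemma ex_RInt_of_ex_derive (f : R -> R) (a b : R) :
  (forall x, Rmin a b <= x <= Rmax a b -> ex_derive f x) -> ex_RInt f a b.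
Proof.
  intros Hf. apply (ex_RInt_continuous (V := R_CompleteNormedModule)). intros x Hx.
  apply (ex_derive_continuous (K := R_AbsRing) (V := R_NormedModule)), Hf, Hx.
Qed.

Lemma RInt_pow_scal (n : nat) (k a b : R) :
  RInt (fun x => x ^ n * k) a b = k * (b ^ S n - a ^ S n) / INR (S n).
Proof.
  assert (HN : INR (S n) <> 0) by (apply not_0_INR; lia).
  apply is_RInt_unique.
  replace (k * (b ^ S n - a ^ S n) / INR (S n))
    with (minus (k * b ^ S n / INR (S n)) (k * a ^ S n / INR (S n)))
    by (unfold minus, plus, opp; simpl; field; exact HN).
  apply (is_RInt_derive (fun x => k * x ^ S n / INR (S n))).
  - intros x _. auto_derive; [exact I |]. fold (INR (S n)). field. exact HN.
  - intros x _. apply (ex_derive_continuous (K := R_AbsRing) (V := R_NormedModule)).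
    auto_derive. exact I.
Qed.

Lemma affine_denominator_neq0 (lam s : R) : 0 < lam -> 0 <= s -> 1 + lam * s <> 0.
Proof. intros Hlam Hs. apply Rgt_not_eq. nra. Qed.

Definition exp_quad_primitive (xi a b c s : R) : R :=
  - exp (- xi * s)
    * ((a * s ^ 2 + b * s + c) / xi + (2 * a * s + b) / xi ^ 2 + 2 * a / xi ^ 3).

Lemma RInt_exp_quad (xi a b c u v : R) : xi <> 0 ->
  RInt (fun s => exp (- xi * s) * (a * s ^ 2 + b * s + c)) u v
  = exp_quad_primitive xi a b c v - exp_quad_primitive xi a b c u.
Proof.
  intros Hxi. apply is_RInt_unique.
  apply (is_RInt_derive (exp_quad_primitive xi a b c)).
  - intros x _. unfold exp_quad_primitive. auto_derive; [exact I |]. field. exact Hxi.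
  - intros x _. apply (ex_derive_continuous (K := R_AbsRing) (V := R_NormedModule)).
    auto_derive. exact I.
Qed.

Lemma gamma0_integrand_affine (lam xi s : R) : 0 < lam -> 0 < xi -> 0 <= s ->
  xi * (Rpower (xi * s + xi / lam) (0 - 1) * exp (- (xi * s + xi / lam)))
  = lam * exp (- (xi / lam)) * (exp (- xi * s) / (1 + lam * s)).
Proof.
  intros Hlam Hxi Hs.
  assert (Hu : 0 < xi * s + xi / lam).
  { replace (xi * s + xi / lam) with (xi / lam * (1 + lam * s)) by (field; lra).
    apply Rmult_lt_0_compat; [apply Rdiv_lt_0_compat | nra]; lra. }
  replace (0 - 1) with (- (1)) by ring.
  rewrite Rpower_Ropp, Rpower_1 by exact Hu.
  replace (- (xi * s + xi / lam)) with (- xi * s + - (xi / lam)) by ring.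
  rewrite exp_plus. assert (0 <= lam * s) by (apply Rmult_le_pos; lra).
  field. clear Hu. repeat split; apply Rgt_not_eq; nra.
Qed.

Lemma RInt_exp_div_affine (lam xi t : R) : 0 < lam -> 0 < xi -> 0 <= t ->
  RInt (fun s => exp (- xi * s) / (1 + lam * s)) 0 t
  = exp (xi / lam) / lam * Gxi lam xi t.
Proof.
  intros Hlam Hxi Ht.
  assert (Hq : 0 < xi / lam) by (apply Rdiv_lt_0_compat; lra).
  unfold Gxi, Gamma_inc.
  replace (xi / lam * (1 + lam * t)) with (xi * t + xi / lam) by (field; lra).
  replace (xi / lam) with (xi * 0 + xi / lam) at 2 by ring.
  rewrite <- RInt_comp_lin.
  2:{ apply ex_RInt_of_ex_derive. intros u [Hu _].
      rewrite Rmult_0_r, Rplus_0_l, Rmin_left in Hu by nra.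
      unfold Rpower. auto_derive. lra. }
  rewrite (RInt_ext
    (fun s => scal xi (Rpower (xi * s + xi / lam) (0 - 1) * exp (- (xi * s + xi / lam))))
    (fun s => scal (lam * exp (- (xi / lam))) (exp (- xi * s) / (1 + lam * s)))).
  2:{ intros s [Hs _]. rewrite Rmin_left in Hs by lra.
      apply gamma0_integrand_affine; lra. }
  rewrite (RInt_scal (V := R_CompleteNormedModule)).
  2:{ apply ex_RInt_of_ex_derive. intros s [Hs _]. rewrite Rmin_left in Hs by lra.
      auto_derive. apply affine_denominator_neq0; assumption. }
  unfold scal; simpl; unfold mult; simpl.
  rewrite exp_Ropp, <- Rmult_assoc.
  replace (exp (xi / lam) / lam * (lam * / exp (xi / lam))) with 1
    by (field; split; [apply Rgt_not_eq, exp_pos | lra]).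
  symmetry. apply Rmult_1_l.
Qed.

Lemma RInt_exp_quad_plus_div_affine (lam xi a b c d t : R) :
  0 < lam -> 0 < xi -> 0 <= t ->
  RInt (fun s => exp (- xi * s) * (a * s ^ 2 + b * s + c + d / (1 + lam * s))) 0 t
  = exp_quad_primitive xi a b c t - exp_quad_primitive xi a b c 0
    + d * (exp (xi / lam) / lam * Gxi lam xi t).
Proof.
  intros Hlam Hxi Ht.
  rewrite <- RInt_exp_div_affine, <- RInt_exp_quad by lra.
  assert (Hden : forall s, Rmin 0 t <= s -> 1 + lam * s <> 0).
  { intros s Hs. rewrite Rmin_left in Hs by lra. apply affine_denominator_neq0; lra. }
  rewrite (RInt_ext _ (fun s => plus (exp (- xi * s) * (a * s ^ 2 + b * s + c))
                                   (scal d (exp (- xi * s) / (1 + lam * s))))).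
  2:{ intros s [Hs _]. unfold plus, scal; simpl; unfold mult; simpl.
      field. apply Hden. lra. }
  rewrite (RInt_plus (V := R_CompleteNormedModule)), (RInt_scal (V := R_CompleteNormedModule)).
  - reflexivity.
  - apply ex_RInt_of_ex_derive. intros s [Hs _]. auto_derive. apply Hden, Hs.
  - apply ex_RInt_of_ex_derive. intros s _. auto_derive. exact I.
  - apply ex_RInt_of_ex_derive. intros s [Hs _].
    unfold scal; simpl; unfold mult; simpl. auto_derive. apply Hden, Hs.
Qed.

Lemma EX_pow (lam v1 v2 vj s : R) (n : nat) :
  EX lam v1 v2 vj (fun x => x ^ n) s
  = (vj * s) ^ n / (1 + lam * s)
    + lam / ((v1 - v2) * (1 + lam * s)) * ((v1 * s) ^ S n - (v2 * s) ^ S n) / INR (S n).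
Proof. unfold EX. rewrite RInt_pow_scal. reflexivity. Qed.

Lemma EX_mean (lam v1 v2 vj s : R) : v1 <> v2 -> 1 + lam * s <> 0 ->
  EX lam v1 v2 vj (fun x => x) s
  = s * (2 * vj + lam * s * (v1 + v2)) / (2 * (1 + lam * s)).
Proof.
  intros Hv Hs.
  transitivity (EX lam v1 v2 vj (fun x => x ^ 1) s).
  { unfold EX. rewrite pow_1. f_equal. apply RInt_ext. intros x _. rewrite pow_1. reflexivity. }
  rewrite EX_pow. simpl INR. field. split; [exact Hs | apply Rminus_eq_contra, Hv].
Qed.

Lemma EX_sq (lam v1 v2 vj s : R) : v1 <> v2 -> 1 + lam * s <> 0 ->
  EX lam v1 v2 vj (fun x => x ^ 2) s
  = s ^ 2 * (3 * vj ^ 2 + lam * s * (v1 ^ 2 + v1 * v2 + v2 ^ 2)) / (3 * (1 + lam * s)).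
Proof.
  intros Hv Hs.
  rewrite EX_pow. simpl INR. field. split; [exact Hs | apply Rminus_eq_contra, Hv].
Qed.

Section Reset.

Variables (lam xi v1 v2 vj t : R).
Hypotheses (Hlam : 0 < lam) (Hxi : 0 < xi) (Ht : 0 <= t).

Lemma EXr_of_partial_fractions (f : R -> R) (a b c d : R) :
  (forall s, 0 <= s <= t ->
     EX lam v1 v2 vj f s = a * s ^ 2 + b * s + c + d / (1 + lam * s)) ->
  EXr lam xi v1 v2 vj f t
  = exp (- xi * t) * EX lam v1 v2 vj f t
    + xi * (exp_quad_primitive xi a b c t - exp_quad_primitive xi a b c 0
            + d * (exp (xi / lam) / lam * Gxi lam xi t)).
Proof.
  intros Hf. unfold EXr.
  rewrite <- RInt_exp_quad_plus_div_affine by assumption.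
  f_equal. f_equal. apply RInt_ext. intros s [Hs0 Hst].
  rewrite Rmin_left in Hs0 by lra. rewrite Rmax_right in Hst by lra.
  rewrite Hf by lra. reflexivity.
Qed.

Hypothesis Hv : v1 <> v2.

Lemma EXr_mean :
  let m := (v1 + v2) / 2 in
  let c := (vj - m) / lam in
  EXr lam xi v1 v2 vj (fun x => x) t
  = exp (- xi * t) * EX lam v1 v2 vj (fun x => x) t
    + xi * (exp_quad_primitive xi 0 m c t - exp_quad_primitive xi 0 m c 0
            + - c * (exp (xi / lam) / lam * Gxi lam xi t)).
Proof.
  intros m c. apply EXr_of_partial_fractions. intros s [Hs _].
  rewrite EX_mean by (try apply affine_denominator_neq0; assumption).
  unfold c, m. field. split; [lra | apply affine_denominator_neq0; assumption].
Qed.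

Lemma EXr_sq :
  let S := v1 ^ 2 + v1 * v2 + v2 ^ 2 in
  let q := (3 * vj ^ 2 - S) / lam in
  EXr lam xi v1 v2 vj (fun x => x ^ 2) t
  = exp (- xi * t) * EX lam v1 v2 vj (fun x => x ^ 2) t
    + xi * (exp_quad_primitive xi (S / 3) (q / 3) (- q / (3 * lam)) t
            - exp_quad_primitive xi (S / 3) (q / 3) (- q / (3 * lam)) 0
            + q / (3 * lam) * (exp (xi / lam) / lam * Gxi lam xi t)).
Proof.
  intros S q. apply EXr_of_partial_fractions. intros s [Hs _].
  rewrite EX_sq by (try apply affine_denominator_neq0; assumption).
  unfold q, S. field. split; [lra | apply affine_denominator_neq0; assumption].
Qed.

End Reset.

Theorem theorem6 (lam xi v1 v2 t : R) (j : nat) :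
  0 < lam -> 0 < xi -> v2 < v1 ->
  ((v2 < 0 /\ 0 < v1) \/ 0 < v2) ->
  (j = 1%nat \/ j = 2%nat) ->
  0 <= t ->
  Delta_ms lam xi v1 v2 j t
    = EX lam v1 v2 (vel v1 v2 j) (fun x => x ^ 2) t + A_fun lam xi v1 v2 j t
  /\ EX lam v1 v2 (vel v1 v2 j) (fun x => x ^ 2) t
    = t ^ 2 * (3 * (vel v1 v2 j) ^ 2 + lam * t * (v1 ^ 2 + v1 * v2 + v2 ^ 2))
      / (3 * (1 + lam * t)).
Proof.
  intros Hlam Hxi Hlt _ Hj Ht.
  assert (Hv : v1 <> v2) by lra.
  assert (HL : 1 + lam * t <> 0) by (apply affine_denominator_neq0; assumption).
  split; [| apply EX_sq; assumption].
  unfold Delta_ms, A_fun. cbv zeta.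
  rewrite EXr_mean, EXr_sq, EX_mean, EX_sq by assumption.
  unfold exp_quad_primitive. rewrite !Rmult_0_r, exp_0.
  destruct Hj as [-> | ->]; unfold vel, vel_other; simpl Nat.eqb; cbv iota;
    field; repeat split; try lra; exact HL.
Qed.
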